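(* If a spherical curve $P$ has a coherent bigon, then $r(P)\le 2$.
   Context: A spherical curve is a smooth immersion $P:S^1\to S^2$ whose self-intersections are finitely many transverse double points, called crossings. It is oriented and has at least one crossing. Regions are the components of $S^2\setminus P(S^1)$, and edges are the arcs of the curve between consecutive crossings. An $n$-gon is a region bounded by $n$ edges; a bigon is a $2$-gon. A region is coherent if its boundary edges, with the orientations induced from $P$, all run in the same rotational direction around the region; otherwise it is incoherent. In Gauss-word terms, a bigon with crossings $y,z$ is coherent iff the word has the form $y z\,W_1\,z y\,W_2$, and incoherent iff it has the form $y z\,W_1\,y z\,W_2$. The Gauss word is the cyclic word of crossings met in one traversal of the curve; each crossing appears twice. Crossings $a,b$ are interlaced if their occurrences alternate $a\dots b\dots a\dots b$. A crossing is reducible if no crossing is interlaced with it; equivalently, only three distinct regions meet at it. $P$ is reducible if it has a reducible crossing, and reduced otherwise. The inverse-half-twisted splice $I$ at a crossing $p$ takes the curve with cyclic Gauss word $p\,A\,p\,B$ to the curve with Gauss word $\overline{A}\,B$, where $\overline{A}$ is $A$ reversed. Geometrically, $p$ is smoothed in the unique way giving a single closed curve, and the result is re-oriented. The reductivity $r(P)$ is the minimal number of successive applications of $I$ needed to reach a reducible spherical curve; $r(P)=0$ if $P$ is reducible. *)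

(* Combinatorial model of spherical curves: a spherical
   curve is encoded by its (linearised) Gauss word together with the local
   orientation of each crossing (a signed Gauss word); it lives on the sphere
   iff the associated 4-regular ribbon graph has Euler characteristic 2. *)
From mathcomp Require Import all_boot.
Unset Printing Implicit Defensive.

(* It is read cyclically; position i of the word is the i-th passage through
   a crossing, and edge i is the arc from position i to position i+1 (mod). *)
Definition gauss_word (w : seq nat) : bool :=
  (0 < size w) && all (fun x => count_mem x w == 2) w.

Definition ncross (w : seq nat) : nat := size (undup w).

(* the other position at which the crossing met at position j is met again *)
Definition partner (w : seq nat) (j : nat) : nat :=
  let c := nth 0 w j in
  let i := index c w in
  if i == j then i.+1 + index c (drop i.+1 w) else i.

(* the element k mod n of 'I_n (n > 0 is witnessed by i : 'I_n) *)
Definition ord_mod (n : nat) (i : 'I_n) (k : nat) : 'I_n :=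
  Ordinal (ltn_pmod k (leq_ltn_trans (leq0n i) (ltn_ord i))).
Arguments ord_mod {n}.

(* A dart is a side of an edge: (i, true) = edge i traversed along the curve
   orientation, (i, false) = edge i traversed against it; in both cases the
   region bounded is on the left of the direction of travel.
   Half-edges at position j: (j, out) = start of edge j, (j, in) = end of
   edge j-1.  Sign convention: for crossing c met first at position a and
   then at position b > a, [s c = true] means that the strand through b
   crosses the strand through a from its right to its left.  Then the
   clockwise successor of a half-edge (j, k) at its crossing is
   (partner j, k (+) f) with f = s c if j is the first passage and
   f = ~~ s c otherwise.  The face permutation: arrive via a half-edge, leave
   along its clockwise successor. *)
Definition next_dart (w : seq nat) (s : nat -> bool)
    (d : 'I_(size w) * bool) : 'I_(size w) * bool :=
  let pos : 'I_(size w) := if d.2 then ordS d.1 else d.1 in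
  let k : bool := ~~ d.2 in            (* arrival half-edge is out iff backward *)
  let j := nat_of_ord pos in
  let j' := partner w j in
  let c := nth 0 w j in
  let f := if j < j' then s c else ~~ s c in
  let pos' : 'I_(size w) := ord_mod pos j' in  (* j' < size w anyway *)
  if k (+) f then (pos', true) else (ord_pred pos', false).

Definition nregions (w : seq nat) (s : nat -> bool) : nat :=
  fcard (next_dart w s) {: 'I_(size w) * bool}.

(* (w, s) is a spherical curve: Euler characteristic V - E + F = 2, i.e.
   F = n + 2 (V = n crossings, E = 2n edges; the graph is connected) *)
Definition spherical (w : seq nat) (s : nat -> bool) : bool :=
  gauss_word w && (nregions w s == ncross w + 2).

Definition bigon_at (w : seq nat) (s : nat -> bool) (d : 'I_(size w) * bool) :=
  order (next_dart w s) d == 2.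

(* it is coherent: both boundary edges run in the same rotational direction *)
Definition coherent_bigon_at (w : seq nat) (s : nat -> bool)
    (d : 'I_(size w) * bool) :=
  bigon_at w s d && (d.2 == (next_dart w s d).2).

Definition has_coherent_bigon (w : seq nat) (s : nat -> bool) : Prop :=
  exists d : 'I_(size w) * bool, coherent_bigon_at w s d.

Definition between (w : seq nat) (a : nat) : seq nat :=
  let i := index a w in
  let rest := drop i.+1 w in
  take (index a rest) rest.

Definition interlaced (w : seq nat) (a b : nat) : bool :=
  (a \in w) && (b \in w) && (count_mem b (between w a) == 1).

Definition reducible_crossing (w : seq nat) (a : nat) : bool :=
  (a \in w) && ~~ has (interlaced w a) w.

Definition reducible (w : seq nat) : bool := has (reducible_crossing w) w.

(* inverse-half-twisted splice: cyclic word  p A p B  |->  rev(A) B.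
   For the linear word X p A p Y the cyclic word is p A p (Y X). *)
Definition splice (w : seq nat) (p : nat) : seq nat :=
  let i := index p w in
  let X := take i w in
  let rest := drop i.+1 w in
  let k := index p rest in
  let A := take k rest in
  let Y := drop k.+1 rest in
  rev A ++ Y ++ X.

(* reducible after at most k successive splices, i.e. r(P) <= k *)
Fixpoint reductivity_le (k : nat) (w : seq nat) : bool :=
  reducible w ||
  (if k is k'.+1 then has (fun p => reductivity_le k' (splice w p)) w else false).

From mathcomp Require Import all_boot zify.

Set Implicit Arguments.
Unset Strict Implicit.

(* The argument is purely combinatorial and uses only that w is a Gauss word. Reducibility and reductivity are invariant under rotation and reversal
      of the word, because splicing commutes with both up to rotation and
      reversal ([reductivity_le_equiv]).
   2. In the word  y z A z y B  either some letter x occurs once in A (hence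
      once in B): splicing x and then y makes the two z's adjacent, a
      reducible crossing; or no letter does: splicing y gives  z rev(A) z B
      and z is interlaced with nothing.  Either way r <= 2
      ([reductivity_bigon_word]).
   3. Two edges i, p whose endpoints carry the same crossings crosswise
      (w_i = w_(p+1), w_(i+1) = w_p) put the word, read from position i, in
      the form  y z A z y B  ([coherent_bigon_word]).
   4. Positions come in pairs (the two passages through a crossing), and the
      face permutation sends a dart to one starting at the partner of its
      head.  A coherent bigon at a dart d and the next dart e therefore give
      two such edges ([coherent_bigon_edges_of_dart]). *)

(* Every letter of v occurs exactly twice (the Gauss-word condition without
   nonemptiness, which is not preserved by splicing). *)
Definition twice (v : seq nat) : bool := all (fun x => count_mem x v == 2) v.

Lemma twice_count (v : seq nat) x : twice v -> x \in v -> count_mem x v = 2.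
Proof. by move=> /allP tv /tv /eqP. Qed.

Lemma twice_perm (u v : seq nat) : perm_eq u v -> twice u = twice v.
Proof.
move=> uv; rewrite /twice (perm_all _ uv); apply: eq_all => x.
by rewrite (permP uv).
Qed.

Lemma split_first (v : seq nat) p :
  p \in v -> exists X R : seq nat, v = X ++ p :: R /\ p \notin X.
Proof.
elim: v => [//|a v IH]; rewrite in_cons; case: (eqVneq p a) => [-> _|ne /= pv].
  by exists [::], v.
have [X [R [-> pX]]] := IH pv.
by exists (a :: X), R; rewrite in_cons negb_or ne.
Qed.

Lemma split_once (A : seq nat) x : count_mem x A = 1 ->
  exists A1 A2 : seq nat, [/\ A = A1 ++ x :: A2, x \notin A1 & x \notin A2].
Proof.
move=> c1; have xA : x \in A by rewrite -has_pred1 has_count c1.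
have [A1 [A2 [eA xA1]]] := split_first xA.
exists A1, A2; split => //; apply/count_memPn.
by move: c1; rewrite eA count_cat (count_memPn xA1) /= eqxx; lia.
Qed.

Lemma gauss_split (v : seq nat) p : count_mem p v = 2 ->
  exists X M Y : seq nat,
    v = X ++ p :: M ++ p :: Y /\ [/\ p \notin X, p \notin M & p \notin Y].
Proof.
move=> c2; have pv : p \in v by rewrite -has_pred1 has_count c2.
have [X [R [eV pX]]] := split_first pv.
have cR : count_mem p R = 1.
  by move: c2; rewrite eV count_cat (count_memPn pX) /= eqxx; lia.
have [M [Y [eR pM pY]]] := split_once cR.
by exists X, M, Y; rewrite eV eR.
Qed.

Lemma index_gauss (X R : seq nat) p : p \notin X -> index p (X ++ p :: R) = size X.
Proof. by move=> pX; rewrite index_cat (negbTE pX) /= eqxx addn0. Qed.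

Lemma drop_gauss (X R : seq nat) p : drop (size X).+1 (X ++ p :: R) = R.
Proof. by rewrite drop_cat ltnNge leqnSn /= subSnn /= drop0. Qed.

Lemma splice_gauss (X M Y : seq nat) p : p \notin X -> p \notin M ->
  splice (X ++ p :: M ++ p :: Y) p = rev M ++ Y ++ X.
Proof.
move=> pX pM; rewrite /splice index_gauss // take_size_cat // drop_gauss.
by rewrite index_gauss // take_size_cat // drop_gauss.
Qed.

Lemma between_gauss (X M Y : seq nat) p : p \notin X -> p \notin M ->
  between (X ++ p :: M ++ p :: Y) p = M.
Proof.
move=> pX pM; rewrite /between index_gauss // drop_gauss.
by rewrite index_gauss // take_size_cat.
Qed.

Lemma rev_gauss (X M Y : seq nat) p :
  rev (X ++ p :: M ++ p :: Y) = rev Y ++ p :: rev M ++ p :: rev X.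
Proof. by rewrite !(rev_cat, rev_cons) -!cats1 -!catA. Qed.

Lemma rot1_gauss (X M Y : seq nat) p :
  rot 1 (X ++ p :: M ++ p :: Y) =
  if X is x :: X' then X' ++ p :: M ++ p :: rcons Y x else M ++ p :: Y ++ [:: p].
Proof. by case: X => [|x X]; rewrite /= rot1_cons !(rcons_cat, rcons_cons) ?cats1. Qed.

Lemma count_splice (v : seq nat) p x : twice v -> p \in v ->
  count_mem x (splice v p) = (x != p) * count_mem x v.
Proof.
move=> tv pv; have [X [M [Y [-> [pX pM pY]]]]] := gauss_split (twice_count tv pv).
rewrite splice_gauss // !count_cat /= count_cat /= count_rev.
case: (eqVneq x p) => [->|_]; last by rewrite /=; lia.
by rewrite !(count_memPn pX, count_memPn pM, count_memPn pY).
Qed.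

Lemma twice_splice (v : seq nat) p : twice v -> p \in v -> twice (splice v p).
Proof.
move=> tv pv; apply/allP => x xs.
have xp : x != p.
  by apply: contraTneq xs => ->; apply/count_memPn; rewrite count_splice // eqxx.
have xv : x \in v.
  apply: contraTT xs => /count_memPn cx.
  by apply/count_memPn; rewrite count_splice // cx muln0.
by rewrite count_splice // xp mul1n (twice_count tv xv).
Qed.

(* Interlacing is a property of the cyclic word: rotating by one letter
   moves the first letter to the end, so the letters between the two
   occurrences of a either stay the same or become the complementary ones. *)
Lemma interlaced_rot1 (v : seq nat) : twice v -> interlaced (rot 1 v) =2 interlaced v.
Proof.
move=> tv a b; rewrite /interlaced !mem_rot.
have [av|] := boolP (a \in v); last by [].
have [bv|] := boolP (b \in v); last by rewrite !andbF.
have cb := twice_count tv bv.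
have [X [M [Y [eV [aX aM aY]]]]] := gauss_split (twice_count tv av).
rewrite eV in cb *; rewrite rot1_gauss between_gauss //.
case: X aX {eV} cb => [|x X] aX cb /=; last first.
  by rewrite between_gauss //; move: aX; rewrite in_cons negb_or => /andP[].
rewrite between_gauss //; move: cb; rewrite /= count_cat /=.
case: (eqVneq a b) => [<-|_] /=; last by lia.
by rewrite !(count_memPn aM, count_memPn aY).
Qed.

Lemma interlaced_rev (v : seq nat) : twice v -> interlaced (rev v) =2 interlaced v.
Proof.
move=> tv a b; rewrite /interlaced !mem_rev.
have [av|] := boolP (a \in v); last by [].
have [X [M [Y [-> [aX aM aY]]]]] := gauss_split (twice_count tv av).
by rewrite rev_gauss !between_gauss ?mem_rev // count_rev.
Qed.

Lemma splice_rot1 (v : seq nat) p : twice v -> p \in v ->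
  splice (rot 1 v) p = splice v p \/ splice (rot 1 v) p = rev (splice v p).
Proof.
move=> tv pv; have [X [M [Y [-> [pX pM pY]]]]] := gauss_split (twice_count tv pv).
rewrite rot1_gauss splice_gauss //.
case: X pX => [|x X] pX; last first.
  left; rewrite splice_gauss -?cats1 -?catA //.
  by move: pX; rewrite in_cons negb_or => /andP[].
by right; rewrite splice_gauss // cats0 rev_cat revK.
Qed.

Lemma splice_rev (v : seq nat) p : twice v -> p \in v ->
  exists k, splice (rev v) p = rot k (rev (splice v p)).
Proof.
move=> tv pv; have [X [M [Y [-> [pX pM pY]]]]] := gauss_split (twice_count tv pv).
rewrite rev_gauss !splice_gauss ?mem_rev // revK !rev_cat revK.
by exists (size (rev X ++ rev Y)); rewrite rot_size_cat.
Qed.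

(* v is obtained from u by rotations and reversals: both words describe the
   same unoriented cyclic Gauss word. *)
Inductive word_equiv (u : seq nat) : seq nat -> Prop :=
| word_equiv_refl : word_equiv u u
| word_equiv_rot1 v : word_equiv u v -> word_equiv u (rot 1 v)
| word_equiv_rev v : word_equiv u v -> word_equiv u (rev v).

Lemma word_equiv_rot (u v : seq nat) k : word_equiv u v -> word_equiv u (rot k v).
Proof.
move=> uv; elim: k => [|k IH]; first by rewrite rot0.
case: (ltnP k (size v)) => [lt_kv|le_vk]; first by rewrite rotS //; constructor.
by rewrite rot_oversize // ltnW.
Qed.

Lemma word_equiv_perm (u v : seq nat) : word_equiv u v -> perm_eq u v.
Proof.
elim=> [|w _ uw|w _ uw]; first exact: perm_refl.
  by rewrite perm_sym perm_rot perm_sym.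
by rewrite perm_sym perm_rev perm_sym.
Qed.

Lemma interlaced_equiv (u v : seq nat) : word_equiv u v -> twice u ->
  interlaced v =2 interlaced u.
Proof.
move=> uv tu; have tv w : word_equiv u w -> twice w.
  by move=> uw; rewrite -(twice_perm (word_equiv_perm uw)).
elim: uv => [//|w uw IH a b|w uw IH a b].
  by rewrite interlaced_rot1 ?tv.
by rewrite interlaced_rev ?tv.
Qed.

Lemma reducible_equiv (u v : seq nat) : word_equiv u v -> twice u ->
  reducible v = reducible u.
Proof.
move=> uv tu; have mem_uv := perm_mem (word_equiv_perm uv).
have int_uv := interlaced_equiv uv tu.
rewrite /reducible /reducible_crossing (eq_has_r mem_uv); apply: eq_has => a.
rewrite mem_uv (eq_has_r mem_uv); congr (_ && ~~ _); apply: eq_has => b.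
exact: int_uv.
Qed.

Lemma splice_equiv (u v : seq nat) p : word_equiv u v -> twice u -> p \in u ->
  word_equiv (splice u p) (splice v p).
Proof.
move=> uv tu pu; have tv w : word_equiv u w -> twice w.
  by move=> uw; rewrite -(twice_perm (word_equiv_perm uw)).
have pv w : word_equiv u w -> p \in w.
  by move=> uw; rewrite -(perm_mem (word_equiv_perm uw)).
elim: uv => [|w uw IH|w uw IH]; first exact: word_equiv_refl.
  by have [->|->] := splice_rot1 (tv w uw) (pv w uw); last constructor.
have [k ->] := splice_rev (tv w uw) (pv w uw).
by apply: word_equiv_rot; constructor.
Qed.

Lemma reductivity_le_equiv k (u v : seq nat) : word_equiv u v -> twice u ->
  reductivity_le k v = reductivity_le k u.
Proof.
elim: k u v => [|k IH] u v uv tu /=; rewrite (reducible_equiv uv tu) //.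
have mem_uv := perm_mem (word_equiv_perm uv).
congr (_ || _); rewrite (eq_has_r mem_uv).
apply: eq_in_has => p; rewrite -mem_uv => pu /=.
by rewrite (IH _ _ (splice_equiv uv tu pu)) // twice_splice.
Qed.

Lemma reductivity_le_reducible k (v : seq nat) : reducible v -> reductivity_le k v.
Proof. by case: k => [|k] /= ->. Qed.

Lemma reductivity_le_splice k (v : seq nat) p :
  p \in v -> reductivity_le k (splice v p) -> reductivity_le k.+1 v.
Proof. by move=> pv red; rewrite /=; apply/orP; right; apply/hasP; exists p. Qed.

Lemma reducible_gauss (X M Y : seq nat) z : z \notin X -> z \notin M ->
  (forall b, count_mem b M != 1) -> reducible (X ++ z :: M ++ z :: Y).
Proof.
move=> zX zM noM; apply/hasP; exists z; first by rewrite mem_cat mem_head orbT.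
rewrite /reducible_crossing mem_cat mem_head orbT /=.
by apply/hasPn => b _; rewrite /interlaced between_gauss // (negbTE (noM b)) andbF.
Qed.

Lemma bigon_word_letters y z (A B : seq nat) : twice (y :: z :: A ++ z :: y :: B) ->
  [/\ y != z, y \notin A, y \notin B, z \notin A & z \notin B].
Proof.
set r := y :: z :: _ => tw; have cy := twice_count tw (mem_head y _).
have cz : count_mem z r = 2 by apply: twice_count => //; rewrite /r !inE eqxx orbT.
move: cy cz; rewrite /r /= !count_cat /= !eqxx.
case: (eqVneq y z) => [<-|ne]; rewrite ?eqxx /=; first lia.
move=> cy cz.
by split => //; apply/count_memPn => /=; lia.
Qed.

(* If some letter x occurs once in A, hence once in B, splicing x and then y
   makes the two occurrences of z adjacent. *)
Lemma reductivity_bigon_word_odd y z x (A B : seq nat) :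
  twice (y :: z :: A ++ z :: y :: B) -> count_mem x A = 1 ->
  reductivity_le 2 (y :: z :: A ++ z :: y :: B).
Proof.
set r := y :: z :: _ => tr cxA; have [ne yA yB zA zB] := bigon_word_letters tr.
have [A1 [A2 [eA xA1 xA2]]] := split_once cxA.
have xA : x \in A by rewrite eA mem_cat mem_head orbT.
have [nxy nxz] : x != y /\ x != z by split; apply: contraTneq xA => ->.
have xr : x \in r by rewrite /r !(inE, mem_cat) xA !orbT.
have cxB : count_mem x B = 1.
  move: (twice_count tr xr); rewrite /= count_cat /= cxA.
  by rewrite ![_ == x]eq_sym (negbTE nxy) (negbTE nxz) /=; lia.
have [B1 [B2 [eB xB1 _]]] := split_once cxB.
have sub_A2 : {subset A2 <= A} by move=> a a2; rewrite eA mem_cat inE a2 !orbT.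
have sub_B1 : {subset B1 <= B} by move=> b b1; rewrite eB mem_cat b1.
have sub_B2 : {subset B2 <= B} by move=> b b2; rewrite eB mem_cat inE b2 !orbT.
have yA2 := contra (@sub_A2 y) yA; have zA2 := contra (@sub_A2 z) zA.
have yB1 := contra (@sub_B1 y) yB; have yB2 := contra (@sub_B2 y) yB.
have zB2 := contra (@sub_B2 z) zB.
have splice_x : splice r x = rev B1 ++ y :: (z :: rev A2 ++ B2) ++ y :: z :: A1.
  have -> : r = (y :: z :: A1) ++ x :: (A2 ++ z :: y :: B1) ++ x :: B2.
    by rewrite /r eA eB /= -!catA.
  rewrite splice_gauss.
  - by rewrite rev_cat !rev_cons -!cats1 /= -!catA.
  - by rewrite !inE !negb_or nxy nxz /=.
  - by rewrite mem_cat !inE !negb_or xA2 nxz nxy /=.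
have splice_xy : splice (splice r x) y = (rev B2 ++ A2) ++ z :: [::] ++ z :: A1 ++ rev B1.
  rewrite splice_x splice_gauss ?mem_rev //; last first.
    by rewrite inE mem_cat mem_rev !negb_or ne yA2 yB2.
  by rewrite rev_cons rev_cat revK -cats1 -!catA.
apply: (reductivity_le_splice xr); apply: (reductivity_le_splice (p := y)).
  by rewrite splice_x mem_cat inE eqxx orbT.
apply: reductivity_le_reducible; rewrite splice_xy; apply: reducible_gauss => //.
by rewrite mem_cat mem_rev negb_or zB2 zA2.
Qed.

(* Otherwise splicing y gives  z rev(A) z B, where z is interlaced with no
   letter. *)
Lemma reductivity_bigon_word_even k y z (A B : seq nat) :
  twice (y :: z :: A ++ z :: y :: B) -> (forall x, count_mem x A != 1) ->
  reductivity_le k.+1 (y :: z :: A ++ z :: y :: B).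
Proof.
set r := y :: z :: _ => tr noA; have [ne yA _ zA _] := bigon_word_letters tr.
apply: (reductivity_le_splice (mem_head _ _ : y \in r)).
have -> : splice r y = [::] ++ z :: rev A ++ z :: B.
  have -> : r = [::] ++ y :: (z :: A ++ [:: z]) ++ y :: B by rewrite /r /= -catA.
  rewrite splice_gauss //; last by rewrite !inE mem_cat !negb_or ne yA.
  by rewrite cats0 rev_cons rev_cat /= -cats1 -catA.
apply: reductivity_le_reducible; apply: reducible_gauss; rewrite ?mem_rev //.
by move=> b; rewrite count_rev.
Qed.

Lemma reductivity_bigon_word y z (A B : seq nat) :
  twice (y :: z :: A ++ z :: y :: B) -> reductivity_le 2 (y :: z :: A ++ z :: y :: B).
Proof.
move=> tr; have [/hasP[x _ /eqP cxA]|/hasPn noA] :=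
  boolP (has (fun x => count_mem x A == 1) A).
  exact: reductivity_bigon_word_odd tr cxA.
apply: reductivity_bigon_word_even => // x.
by case: (boolP (x \in A)) => [/noA //|/count_memPn ->].
Qed.

(* Edges i and p of w (edge j joins positions j and j+1 mod |w|) bound a
   coherent bigon: they are distinct and not adjacent, and their endpoints
   carry the same two crossings crosswise, so that w read from position i is
   y z ... z y ... *)
Definition coherent_bigon_edges (w : seq nat) (i p : 'I_(size w)) : Prop :=
  [/\ p != i, p != ordS i, ordS p != i,
      nth 0 w i = nth 0 w (ordS p) & nth 0 w (ordS i) = nth 0 w p].

Lemma nth_rot (T : Type) (x0 : T) (v : seq T) k t : k <= size v -> t < size v ->
  nth x0 (rot k v) t = nth x0 v ((k + t) %% size v).
Proof.
move=> kv tv; rewrite /rot nth_cat size_drop; case: ltnP => h.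
  by rewrite nth_drop modn_small //; lia.
rewrite nth_take; last lia.
have -> : k + t = (t - (size v - k)) + size v by lia.
by rewrite modnDr modn_small //; lia.
Qed.

Lemma modn_wrap a n : a < n + n -> a %% n = if a < n then a else a - n.
Proof.
case: ifP => [/modn_small //|/negbT]; rewrite -leqNgt => le_na lt_a2n.
by rewrite -[in LHS](subnK le_na) modnDr modn_small //; lia.
Qed.

Lemma split_at (r : seq nat) q : 2 <= q -> q.+1 < size r ->
  r = nth 0 r 0 :: nth 0 r 1 :: take (q - 2) (drop 2 r) ++
      nth 0 r q :: nth 0 r q.+1 :: drop q.+2 r.
Proof.
move=> le2q lt_qr.
have tail_q : drop q r = nth 0 r q :: nth 0 r q.+1 :: drop q.+2 r.
  by rewrite (drop_nth 0) 1?(drop_nth 0 (n := q.+1)) //; lia.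
have head_2 : r = nth 0 r 0 :: nth 0 r 1 :: drop 2 r.
  by rewrite -{1}(drop0 r) (drop_nth 0) 1?(drop_nth 0 (n := 1)) //; lia.
rewrite {1}head_2 -tail_q -{1}(cat_take_drop (q - 2) (drop 2 r)) drop_drop.
by congr (_ :: _ :: _ ++ drop _ _); lia.
Qed.

Lemma offset_bounds n i p : i < n -> p < n -> p != i -> p != i.+1 %% n ->
  p.+1 %% n != i -> 2 <= (p + n - i) %% n /\ ((p + n - i) %% n).+1 < n.
Proof.
move=> lt_in lt_pn; rewrite !modn_wrap.
all: by case: (ltnP i.+1 n) => ?; case: (ltnP p.+1 n) => ?;
  case: (ltnP (p + n - i) n) => ?; lia.
Qed.

Lemma offset_shift n i p : i < n -> p < n ->
  (i + (p + n - i) %% n) %% n = p /\ (i + ((p + n - i) %% n).+1) %% n = p.+1 %% n.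
Proof.
move=> lt_in lt_pn; have e0 : i + (p + n - i) = p + n by lia.
have e1 : i.+1 + (p + n - i) = p.+1 + n by lia.
by rewrite addnS -addSn !modnDmr e0 e1 !modnDr modn_small.
Qed.

Lemma coherent_bigon_word (w : seq nat) (i p : 'I_(size w)) :
  coherent_bigon_edges i p ->
  exists y z (A B : seq nat), word_equiv (y :: z :: A ++ z :: y :: B) w.
Proof.
case; rewrite -!val_eqE /= => ne_pi ne_pSi ne_Spi e1 e2.
have [lt_in lt_pn] := (ltn_ord i, ltn_ord p).
have [le2q lt_qn] := offset_bounds lt_in lt_pn ne_pi ne_pSi ne_Spi.
have [shift_q shift_q1] := offset_shift lt_in lt_pn.
set q := (p + size w - i) %% size w in le2q lt_qn shift_q shift_q1.
have nth_r t : t < size w -> nth 0 (rot i w) t = nth 0 w ((i + t) %% size w).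
  by move=> lt_tw; rewrite nth_rot // ltnW.
have lt_qw : q < size w := ltnW lt_qn.
have lt_1w : 1 < size w := leq_trans le2q (ltnW lt_qw).
have lt_0w : 0 < size w := ltnW lt_1w.
have lt_qr : q.+1 < size (rot i w) by rewrite size_rot.
have := split_at le2q lt_qr.
rewrite !nth_r // addn0 addn1 shift_q shift_q1 (modn_small lt_in) -e2 -e1 => r_eq.
exists (nth 0 w i), (nth 0 w (i.+1 %% size w)),
  (take (q - 2) (drop 2 (rot i w))), (drop q.+2 (rot i w)).
rewrite -r_eq -[w in word_equiv _ w](rotK i).
exact: word_equiv_rot (word_equiv_refl _).
Qed.

Lemma nth_gauss_first (X M Y : seq nat) c : nth 0 (X ++ c :: M ++ c :: Y) (size X) = c.
Proof. by rewrite nth_cat ltnn subnn. Qed.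

Lemma nth_gauss_second (X M Y : seq nat) c :
  nth 0 (X ++ c :: M ++ c :: Y) ((size X).+1 + size M) = c.
Proof.
rewrite nth_cat ifN; last lia.
by rewrite (_ : _ - size X = (size M).+1) /= ?nth_cat ?ltnn ?subnn //; lia.
Qed.

Lemma partner_gauss (X M Y : seq nat) c : c \notin X -> c \notin M ->
  partner (X ++ c :: M ++ c :: Y) (size X) = (size X).+1 + size M /\
  partner (X ++ c :: M ++ c :: Y) ((size X).+1 + size M) = size X.
Proof.
move=> cX cM; rewrite /partner nth_gauss_first nth_gauss_second index_gauss // eqxx.
by rewrite drop_gauss index_gauss // ifN // neq_ltn addSn ltnS leq_addr.
Qed.

Lemma position_gauss (X M Y : seq nat) c j : c \notin X -> c \notin M -> c \notin Y ->
  j < size (X ++ c :: M ++ c :: Y) -> nth 0 (X ++ c :: M ++ c :: Y) j = c ->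
  j = size X \/ j = (size X).+1 + size M.
Proof.
move=> cX cM cY lt_jv; rewrite nth_cat.
case: ltnP => [lt_jX eXj|le_Xj]; first by move: cX; rewrite -eXj mem_nth.
case: (ltngtP j (size X)) le_Xj => // [gt_jX _|-> _]; last by left.
rewrite -[j - size X](subnSK gt_jX) /= nth_cat.
case: ltnP => [lt_M eMj|le_Mj]; first by move: cM; rewrite -eMj mem_nth.
case: (ltngtP (j - (size X).+1) (size M)) le_Mj => // [gt_M _|e _]; last by right; lia.
rewrite (_ : j - (size X).+1 - size M = (j - (size X).+2 - size M).+1) /=; last lia.
move=> eYj; move: cY; rewrite -eYj mem_nth //.
by move: lt_jv; rewrite size_cat /= size_cat /=; lia.
Qed.

Lemma partner_spec (w : seq nat) j : twice w -> j < size w ->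
  [/\ partner w j < size w, partner w j != j,
      nth 0 w (partner w j) = nth 0 w j & partner w (partner w j) = j].
Proof.
move=> tw lt_jw.
have [X [M [Y [eW [cX cM cY]]]]] := gauss_split (twice_count tw (mem_nth 0 lt_jw)).
set c := nth 0 w j in eW cX cM cY.
have [first second] := partner_gauss Y cX cM; rewrite -eW in first second.
have nth_first : nth 0 w (size X) = c by rewrite eW nth_gauss_first.
have nth_second : nth 0 w ((size X).+1 + size M) = c by rewrite eW nth_gauss_second.
have size_w : size w = (size X).+1 + size M + (size Y).+1.
  by rewrite eW size_cat /= size_cat /=; lia.
have := position_gauss cX cM cY; rewrite -eW => /(_ j lt_jw erefl).
by case=> ->; rewrite ?first ?second ?nth_first ?nth_second; split => //; lia.
Qed.

Definition dart_tail (w : seq nat) (d : 'I_(size w) * bool) : 'I_(size w) :=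
  if d.2 then d.1 else ordS d.1.

Definition dart_head (w : seq nat) (d : 'I_(size w) * bool) : 'I_(size w) :=
  if d.2 then ordS d.1 else d.1.

Lemma dart_head_inj (w : seq nat) (d e : 'I_(size w) * bool) :
  d.2 = e.2 -> dart_head d = dart_head e -> d = e.
Proof.
by case: d e => [i b] [p c] /= <-; rewrite /dart_head; case: b => /= [/ordS_inj|] ->.
Qed.

Lemma next_dart_tail (w : seq nat) s d :
  dart_tail (next_dart w s d) = ord_mod (dart_head d) (partner w (dart_head d)).
Proof. by rewrite /next_dart; case: ifP => _; rewrite /dart_tail /= ?ord_predK. Qed.

Lemma val_next_dart_tail (w : seq nat) s d : twice w ->
  val (dart_tail (next_dart w s d)) = partner w (dart_head d).
Proof.
move=> tw; rewrite next_dart_tail /= modn_small //.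
by case: (partner_spec tw (ltn_ord (dart_head d))).
Qed.

(* A point of order 2 moves, and its image returns to it (or is fixed, when
   f is not injective). *)
Lemma order2 (T : finType) (f : T -> T) x : order f x == 2 ->
  f x != x /\ (f (f x) = x \/ f (f x) = f x).
Proof.
move=> o2; have orb_x : orbit f x = [:: x; f x] by rewrite /orbit (eqP o2).
have := orbit_uniq f x; rewrite orb_x /= andbT inE eq_sym => -> ; split => //.
have : f (f x) \in orbit f x by rewrite -fconnect_orbit (fconnect_iter f 2).
by rewrite orb_x !inE => /orP[] /eqP; [left|right].
Qed.

Lemma coherent_bigon_edges_of_linked (w : seq nat) (d e : 'I_(size w) * bool) :
  twice w -> d.2 = e.2 -> d != e ->
  val (dart_tail e) = partner w (dart_head d) ->
  val (dart_tail d) = partner w (dart_head e) ->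
  coherent_bigon_edges d.1 e.1.
Proof.
move=> tw; have crossed (j k : 'I_(size w)) :
    val j = partner w k -> j != k /\ nth 0 w j = nth 0 w k.
  move=> ejk; have [_ ne_k e_k _] := partner_spec tw (ltn_ord k).
  by rewrite -val_eqE /= ejk.
case: d e => [i b] [p c] /= <- ne /crossed[ne1 e1] /crossed[ne2 e2].
have ne_pi : p != i by apply: contraNneq ne => ->.
by case: b {ne} ne1 e1 ne2 e2 => /= ne1 e1 ne2 e2; split; rewrite // eq_sym.
Qed.

(* A coherent bigon at d: d and the next dart e are distinct, in the same
   direction, and e is followed by d again (it cannot be fixed, since the
   partner map is injective); so d and e are linked as above. *)
Lemma coherent_bigon_edges_of_dart (w : seq nat) s d : twice w ->
  coherent_bigon_at w s d -> coherent_bigon_edges d.1 (next_dart w s d).1.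
Proof.
move=> tw /andP[bigon /eqP same_dir].
have link x := val_next_dart_tail s x tw.
have [moved back] := order2 bigon.
set e := next_dart w s d in same_dir moved back *.
apply: coherent_bigon_edges_of_linked => //; first by rewrite eq_sym.
  exact: link d.
case: back => [<-|fixed]; first exact: link e.
have heads : dart_head e = dart_head d.
  apply: val_inj; have [_ _ _ inv_e] := partner_spec tw (ltn_ord (dart_head e)).
  have [_ _ _ inv_d] := partner_spec tw (ltn_ord (dart_head d)).
  by rewrite /= -inv_e -inv_d -(link e) fixed -(link d).
by move: moved; rewrite (dart_head_inj same_dir (esym heads)) eqxx.
Qed.

Theorem mainTheorem3 (w : seq nat) (s : nat -> bool) :
  spherical w s -> has_coherent_bigon w s -> reductivity_le 2 w.
Proof.
move=> /andP[/andP[_ tw] _] [d coherent].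
have edges := coherent_bigon_edges_of_dart tw coherent.
have [y [z [A [B equiv]]]] := coherent_bigon_word edges.
have tr : twice (y :: z :: A ++ z :: y :: B).
  by rewrite (twice_perm (word_equiv_perm equiv)).
by rewrite (reductivity_le_equiv 2 equiv tr) reductivity_bigon_word.
Qed.
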